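(* Let $t\in\mathbb{C}^\times$. A linear map $T\colon\mathcal{A}\to\mathbb{C}$ is a $g_t$-twisted trace if and only if $T$ vanishes on $\mathcal{A}_i$ for all $i\neq 0$ and, identifying $\mathcal{A}_0=\mathbb{C}[Z,Z^{-1}]$ with $\mathbb{C}[z,z^{-1}]$, \[ T\big(P(q^{-1}z)R(q^{-1}z)-tP(qz)R(qz)\big)=0\qquad\text{for all } R\in\mathbb{C}[z,z^{-1}]. \] Moreover, the space of $g_t$-twisted traces on $\mathcal{A}$ has dimension $n$.
   Context: Let $q\in\mathbb{C}$ with $0<|q|<1$. Let $P\in\mathbb{C}[z,z^{-1}]$ be a Laurent polynomial, $P=az^k+\dots+bz^l$ with $a,b\neq0$, $k\ge l$, and let $n=k-l$ (the number of nonzero roots of $P$ counted with multiplicity); assume $n>0$. The generalized $q$-Weyl algebra $\mathcal{A}=\mathcal{A}_P$ is the $\mathbb{C}$-algebra generated by $u,v,Z,Z^{-1}$ with relations $ZZ^{-1}=Z^{-1}Z=1$, $ZuZ^{-1}=q^2u$, $ZvZ^{-1}=q^{-2}v$, $uv=P(q^{-1}Z)$, $vu=P(qZ)$. For $i\in\mathbb{Z}$ let $\mathcal{A}_i=\{a\in\mathcal{A}: ZaZ^{-1}=q^{2i}a\}$; then $\mathcal{A}=\bigoplus_{i\in\mathbb{Z}}\mathcal{A}_i$, with $\mathcal{A}_i=u^i\mathbb{C}[Z,Z^{-1}]$ for $i\ge0$ and $\mathcal{A}_i=v^{-i}\mathbb{C}[Z,Z^{-1}]$ for $i\le 0$. For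 $t\in\mathbb{C}^\times$, $g_t$ denotes the automorphism of $\mathcal{A}$ with $g_t(u)=tu$, $g_t(v)=t^{-1}v$, $g_t(Z)=Z$. A linear map $T\colon\mathcal{A}\to\mathbb{C}$ is a $g_t$-twisted trace if $T(ab)=T(b\,g_t(a))$ for all $a,b\in\mathcal{A}$. *)

From HB Require Import structures.
From mathcomp Require Import all_boot all_order all_algebra.
From mathcomp Require Import reals complex.
Set Implicit Arguments. Unset Strict Implicit. Unset Printing Implicit Defensive.
Import Order.TTheory GRing.Theory Num.Theory.
Local Open Scope ring_scope.

Section GWA.
Variable R : realType.
Local Notation C := R[i].

Definition peval (A : algType C) (p : {poly C}) (x : A) : A :=
  \sum_(k < size p) p`_k *: x ^+ k.

(* integer power of x, where xi plays the role of x^{-1} *)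
Definition powz (A : algType C) (x xi : A) (l : int) : A :=
  match l with
  | Posz k => x ^+ k
  | Negz k => xi ^+ k.+1
  end.

Definition lpeval (A : algType C) (l : int) (p : {poly C}) (x xi : A) : A :=
  powz x xi l * peval p x.

(* The defining relations of the generalized q-Weyl algebra A_P, where
   P(z) = z^l * p(z). *)
Definition gwa_rels (q : C) (l : int) (p : {poly C}) (A : algType C)
  (u v Z Zi : A) : Prop :=
  [/\ Z * Zi = 1 /\ Zi * Z = 1,
      Z * u * Zi = (q ^+ 2) *: u,
      Z * v * Zi = (q ^- 2) *: v,
      u * v = lpeval l p (q^-1 *: Z) (q *: Zi)
    & v * u = lpeval l p (q *: Z) (q^-1 *: Zi)].

Definition is_linmap (A B : lmodType C) (f : A -> B) : Prop :=
  forall (c : C) (x y : A), f (c *: x + y) = c *: f x + f y.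

Definition is_alghom (A B : algType C) (f : A -> B) : Prop :=
  [/\ is_linmap f, f 1 = 1 & forall x y, f (x * y) = f x * f y].

(* (A, u, v, Z, Zi) is the algebra presented by generators u, v, Z, Z^{-1}
   and the relations gwa_rels: it satisfies the relations and is universal
   among C-algebras with elements satisfying them. *)
Definition is_gwa (q : C) (l : int) (p : {poly C}) (A : algType C)
  (u v Z Zi : A) : Prop :=
  gwa_rels q l p u v Z Zi /\
  forall (B : algType C) (u' v' Z' Zi' : B), gwa_rels q l p u' v' Z' Zi' ->
    exists f : A -> B,
      [/\ is_alghom f, f u = u', f v = v', f Z = Z' & f Zi = Zi'] /\
      forall g : A -> B,
        [/\ is_alghom g, g u = u', g v = v', g Z = Z' & g Zi = Zi'] ->
        forall a, g a = f a.

Definition is_gt (t : C) (A : algType C) (u v Z Zi : A) (g : A -> A) : Prop :=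
  [/\ is_alghom g, g u = t *: u, g v = t^-1 *: v, g Z = Z & g Zi = Zi].

Definition is_linform (A : algType C) (T : A -> C) : Prop :=
  forall (c : C) (x y : A), T (c *: x + y) = c * T x + T y.

Definition is_twisted_trace (A : algType C) (g : A -> A) (T : A -> C) : Prop :=
  is_linform T /\ forall a b : A, T (a * b) = T (b * g a).

Definition weight_space (q : C) (A : algType C) (Z Zi : A) (i : int) : pred A :=
  fun a => Z * a * Zi == (q ^ (2 * i)) *: a.

End GWA.

From HB Require Import structures.
From mathcomp Require Import all_boot all_order all_algebra.
From mathcomp Require Import reals complex boolp zify ring.
Import Order.TTheory GRing.Theory Num.Theory.
Local Open Scope ring_scope.
Set Implicit Arguments. Unset Strict Implicit. Unset Printing Implicit Defensive.

(* Write X = q^-1 Z, so that uv = P(X) and vu = P(q^2 X), and X^j for its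
   integer powers.  The proof has three parts.

   By the relations
      and the induction principle given by the universal property, every
      element of A is a sum of terms u^i L(X) (v^-i L(X) for i < 0), L a
      Laurent polynomial, and u^i L(X) has Z-weight q^{2i}.  A concrete
      representation of A on sequences Z -> C (Z diagonal with eigenvalues
      q^{2k}, u a shift) shows that L(X) = 0 forces L = 0, and weight vectors
      of distinct weights are independent.  Hence for any c : Z -> C the
      linear form trace_of c : u^i L(X) |-> [i = 0] (L paired with c) is
      well defined.
   2. Characterization.  A twisted trace T kills the nonzero weights (take
      the trace of Z a Z^-1) and satisfies the stated condition (move u
      around).  Conversely such a T satisfies T(ab) = T(b g(a)) for every
      generator a, hence for all a by induction.
   3. Dimension.  On A_0 the condition says that d(j) = (1 - t q^{2j}) c(j),
      with c(j) = T(X^j), satisfies the linear recurrence of order n with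
      characteristic polynomial p (section Recurrence).  Its solutions are
      determined by n consecutive values and 1 - t q^{2j} vanishes for at
      most one j, so the traces trace_of c_k with c_k dual to these n values
      form a basis. *)

Lemma lpeval_1 (R : realType) (A : algType R[i]) m (x xi : A) :
  lpeval m 1 x xi = powz x xi m.
Proof.
by rewrite /lpeval /peval size_poly1 big_ord1 coefC /= scale1r expr0 mulr1.
Qed.

Section AlgHom.
Variable R : realType.
Local Notation C := R[i].
Variables (A B : algType C) (f : A -> B).
Hypothesis hf : is_alghom f.

Lemma alghom0 : f 0 = 0.
Proof.
case: hf => lin _ _; have := lin 1 0 0; rewrite !scale1r !addr0 => h.
by apply: (addrI (f 0)); rewrite addr0 -h.
Qed.

Lemma alghomD x y : f (x + y) = f x + f y.
Proof. by case: hf => lin _ _; have := lin 1 x y; rewrite !scale1r. Qed.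

Lemma alghomZ c x : f (c *: x) = c *: f x.
Proof. by case: hf => lin _ _; rewrite -[c *: x]addr0 lin alghom0 addr0. Qed.

Lemma alghomM x y : f (x * y) = f x * f y.
Proof. by case: hf. Qed.

Lemma alghom1 : f 1 = 1.
Proof. by case: hf. Qed.

Lemma alghom_sum (I : Type) (s : seq I) (F : I -> A) :
  f (\sum_(x <- s) F x) = \sum_(x <- s) f (F x).
Proof.
elim: s => [|x s IH]; first by rewrite !big_nil alghom0.
by rewrite !big_cons alghomD IH.
Qed.

Lemma alghomX x n : f (x ^+ n) = f x ^+ n.
Proof.
elim: n => [|n IH]; first by rewrite !expr0 alghom1.
by rewrite !exprS alghomM IH.
Qed.

Lemma alghom_powz x xi m : f (powz x xi m) = powz (f x) (f xi) m.
Proof. by case: m => n /=; rewrite alghomX. Qed.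

Lemma alghom_lpeval m r x xi : f (lpeval m r x xi) = lpeval m r (f x) (f xi).
Proof.
rewrite /lpeval /peval alghomM alghom_powz alghom_sum; congr (_ * _).
by apply: eq_bigr => k _; rewrite alghomZ alghomX.
Qed.

End AlgHom.

Lemma alghom_id (R : realType) (A : algType R[i]) : is_alghom (@id A).
Proof. by []. Qed.

Lemma alghom_comp (R : realType) (A B D : algType R[i]) (f : A -> B) (g : B -> D) :
  is_alghom f -> is_alghom g -> is_alghom (g \o f).
Proof.
move=> hf hg; split => [c x y|/=|x y /=].
- by rewrite /= (alghomD hf) (alghomZ hf) (alghomD hg) (alghomZ hg).
- by rewrite (alghom1 hf) (alghom1 hg).
- by rewrite (alghomM hf) (alghomM hg).
Qed.

Section LinearForm.
Variable R : realType.
Local Notation C := R[i].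
Variables (A : algType C) (T : A -> C).
Hypothesis hT : is_linform T.

Lemma linform0 : T 0 = 0.
Proof.
have := hT 1 0 0; rewrite scale1r !addr0 mul1r => h.
by apply: (addrI (T 0)); rewrite addr0 -h.
Qed.

Lemma linformD x y : T (x + y) = T x + T y.
Proof. by have := hT 1 x y; rewrite scale1r mul1r. Qed.

Lemma linformZ c x : T (c *: x) = c * T x.
Proof. by rewrite -[c *: x]addr0 hT linform0 addr0. Qed.

Lemma linformB x y : T (x - y) = T x - T y.
Proof. by rewrite linformD -scaleN1r linformZ mulN1r. Qed.

Lemma linform_sum (I : Type) (s : seq I) (F : I -> A) :
  T (\sum_(x <- s) F x) = \sum_(x <- s) T (F x).
Proof.
elim: s => [|x s IH]; first by rewrite !big_nil linform0.
by rewrite !big_cons linformD IH.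
Qed.

Lemma linform_mull a : is_linform (fun b => T (a * b)).
Proof. by move=> c x y /=; rewrite mulrDr -scalerAr hT. Qed.

Lemma linform_mulr a : is_linform (fun b => T (b * a)).
Proof. by move=> c x y /=; rewrite mulrDl -scalerAl hT. Qed.

End LinearForm.

Section Relations.
Variable R : realType.
Local Notation C := R[i].
Variables (q : C) (l : int) (p : {poly C}) (A : algType C) (u v Z Zi : A).
Hypothesis q0 : q != 0.
Hypothesis rels : gwa_rels q l p u v Z Zi.

Definition Xq : A := q^-1 *: Z.
Definition Xqinv : A := q *: Zi.
Definition Xpow (j : int) : A := powz Xq Xqinv j.

Lemma ZZi : Z * Zi = 1. Proof. by case: rels => -[]. Qed.
Lemma ZiZ : Zi * Z = 1. Proof. by case: rels => -[]. Qed.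

Lemma XqXqinv : Xq * Xqinv = 1.
Proof. by rewrite -scalerAl -scalerAr scalerA mulVf // ZZi scale1r. Qed.
Lemma XqinvXq : Xqinv * Xq = 1.
Proof. by rewrite -scalerAl -scalerAr scalerA mulfV // ZiZ scale1r. Qed.

Lemma Xpow0 : Xpow 0 = 1. Proof. by []. Qed.

Lemma XpowS j : Xpow (j + 1) = Xq * Xpow j.
Proof.
case: j => [n|[|n]]; first by rewrite /Xpow -PoszD addn1 /= exprS.
  by rewrite /Xpow /= expr1 XqXqinv.
have -> : Negz n.+1 + 1 = Negz n by rewrite !NegzE; lia.
by rewrite /Xpow /= [Xqinv ^+ n.+2]exprS mulrA XqXqinv mul1r.
Qed.

Lemma XpowP j : Xpow (j - 1) = Xqinv * Xpow j.
Proof. by rewrite -{2}(subrK 1 j) XpowS mulrA XqinvXq mul1r. Qed.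

Lemma Xpow_add i j : Xpow (i + j) = Xpow i * Xpow j.
Proof.
have cXX : GRing.comm Xq Xqinv by rewrite /GRing.comm XqXqinv XqinvXq.
have cX k : GRing.comm Xq (Xpow k).
  by case: k => n; apply: commrX.
have cXi k : GRing.comm Xqinv (Xpow k).
  by case: k => n; apply: commrX.
elim/int_rec: j => [|n IH|n IH]; first by rewrite addr0 Xpow0 mulr1.
  by rewrite -addn1 PoszD addrA !XpowS IH !mulrA (cX i).
by rewrite -addn1 PoszD opprD addrA !XpowP IH !mulrA (cXi i).
Qed.

(* A Laurent polynomial is a list of (exponent, coefficient) pairs;
   leval s is its value at X. *)
Definition leval (s : seq (int * C)) : A := \sum_(x <- s) x.2 *: Xpow x.1.

Definition lterms (m : int) (r : {poly C}) : seq (int * C) :=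
  [seq (m + k%:Z, r`_k) | k <- iota 0 (size r)].
Definition dilate (c : C) (s : seq (int * C)) : seq (int * C) :=
  [seq (x.1, x.2 * c ^ x.1) | x <- s].
Definition scale_terms (a : C) (s : seq (int * C)) : seq (int * C) :=
  [seq (x.1, a * x.2) | x <- s].
Definition terms_mul (s s' : seq (int * C)) : seq (int * C) :=
  [seq (x.1 + y.1, x.2 * y.2) | x <- s, y <- s'].

Lemma leval_Xpow j : leval [:: (j, 1)] = Xpow j.
Proof. by rewrite /leval big_seq1 scale1r. Qed.

Lemma leval_scale a s : a *: leval s = leval (scale_terms a s).
Proof.
rewrite /leval big_map scaler_sumr; apply: eq_bigr => x _ /=; by rewrite scalerA.
Qed.

Lemma leval_mul s s' : leval s * leval s' = leval (terms_mul s s').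
Proof.
rewrite /leval /terms_mul big_allpairs_dep mulr_suml; apply: eq_bigr => x _.
rewrite mulr_sumr; apply: eq_bigr => y _ /=.
by rewrite -scalerAl -scalerAr scalerA Xpow_add.
Qed.

Lemma powz_dilate (c : C) m : c != 0 ->
  powz (c *: Xq) (c^-1 *: Xqinv) m = c ^ m *: Xpow m.
Proof. by move=> c0; case: m => n /=; rewrite exprZn ?exprVn. Qed.

Lemma lpeval_dilate (c : C) m r : c != 0 ->
  lpeval m r (c *: Xq) (c^-1 *: Xqinv) = leval (dilate c (lterms m r)).
Proof.
move=> c0; rewrite /lpeval /peval /leval /dilate /lterms -map_comp big_map.
rewrite powz_dilate //.
have -> : iota 0 (size r) = index_iota 0 (size r) by rewrite /index_iota subn0.
rewrite big_mkord mulr_sumr.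
apply: eq_bigr => k _ /=.
rewrite exprZn -!scalerAl -!scalerAr !scalerA -[Xq ^+ k]/(Xpow k) -Xpow_add.
by rewrite expfzDr // mulrC (mulrC (c ^ m)) mulrA.
Qed.

Lemma lpeval_terms m r : lpeval m r Xq Xqinv = leval (lterms m r).
Proof.
have := lpeval_dilate m r (oner_neq0 C); rewrite invr1 !scale1r => ->.
congr leval; rewrite /dilate -[RHS]map_id; apply: eq_map => -[j a] /=.
by rewrite exp1rz mulr1.
Qed.

Definition lam (i : int) : C := q ^ (2 * i).
Definition weight (i : int) (a : A) : Prop := Z * a * Zi = lam i *: a.

Lemma weightP i a : reflect (weight i a) (a \in weight_space q Z Zi i).
Proof. exact: eqP. Qed.

Lemma lam_add i j : lam (i + j) = lam i * lam j.
Proof. by rewrite /lam mulrDr expfzDr. Qed.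
Lemma lam0 : lam 0 = 1. Proof. by rewrite /lam mulr0 expr0z. Qed.
Lemma lam1 : lam 1 = q ^+ 2. Proof. by rewrite /lam mulr1. Qed.
Lemma lamN1 : lam (-1) = q ^- 2. Proof. by rewrite /lam mulrN1 -exprnN. Qed.
Lemma lam_neq0 i : lam i != 0. Proof. by rewrite /lam expfz_neq0. Qed.
Lemma lam1_exp j : lam 1 ^ j = lam j.
Proof. by rewrite /lam exprz_exp mulr1. Qed.

Lemma weight_add i a b : weight i a -> weight i b -> weight i (a + b).
Proof. by rewrite /weight => ha hb; rewrite mulrDr mulrDl ha hb scalerDr. Qed.
Lemma weight_scale i c a : weight i a -> weight i (c *: a).
Proof. by rewrite /weight => ha; rewrite -scalerAr -scalerAl ha !scalerA mulrC. Qed.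
Lemma weight_mul i j a b : weight i a -> weight j b -> weight (i + j) (a * b).
Proof.
rewrite /weight => ha hb.
have -> : Z * (a * b) * Zi = (Z * a * Zi) * (Z * b * Zi).
  by rewrite !mulrA -[Z * a * Zi * Z]mulrA ZiZ mulr1.
by rewrite ha hb -scalerAl -scalerAr scalerA lam_add.
Qed.
Lemma weight_exp i a n : weight i a -> weight (i * n%:Z) (a ^+ n).
Proof.
move=> ha; elim: n => [|n IH].
  by rewrite expr0 mulr0 /weight lam0 scale1r mulr1 ZZi.
by rewrite exprS -addn1 PoszD mulrDr mulr1 addrC; apply: weight_mul.
Qed.

Lemma weight_Z : weight 0 Z. Proof. by rewrite /weight lam0 scale1r -mulrA ZZi mulr1. Qed.
Lemma weight_Zi : weight 0 Zi. Proof. by rewrite /weight lam0 scale1r ZZi mul1r. Qed.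
Lemma weight_u : weight 1 u. Proof. by rewrite /weight lam1; case: rels. Qed.
Lemma weight_v : weight (-1) v. Proof. by rewrite /weight lamN1; case: rels. Qed.

Lemma weight_Xpow j : weight 0 (Xpow j).
Proof.
case: j => n /=.
  by have := weight_exp n (weight_scale q^-1 weight_Z); rewrite mul0r.
by have := weight_exp n.+1 (weight_scale q weight_Zi); rewrite mul0r.
Qed.

Lemma weight_leval s : weight 0 (leval s).
Proof.
rewrite /leval; elim: s => [|x s IH].
  by rewrite big_nil /weight mulr0 mul0r scaler0.
by rewrite big_cons -[0]addr0; apply/weight_add/IH/weight_scale/weight_Xpow.
Qed.

Definition upow (i : int) : A :=
  match i with Posz k => u ^+ k | Negz k => v ^+ k.+1 end.

Lemma weight_upow i : weight i (upow i).
Proof.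
case: i => n /=; first by have := weight_exp n weight_u; rewrite mul1r.
by have := weight_exp n.+1 weight_v; rewrite NegzE mulN1r.
Qed.

Lemma weight_commZ i a : weight i a -> Z * a = lam i *: (a * Z).
Proof. by rewrite /weight => ha; rewrite -[Z * a]mulr1 -ZiZ mulrA ha -scalerAl. Qed.

Lemma weight_commZi i a : weight i a -> Zi * a = (lam i)^-1 *: (a * Zi).
Proof.
rewrite /weight => ha.
have -> : a * Zi = Zi * (Z * a * Zi) by rewrite !mulrA ZiZ mul1r.
by rewrite ha -scalerAr scalerA mulVf ?lam_neq0 // scale1r.
Qed.

Lemma weight_commXq i a : weight i a -> Xq * a = lam i *: (a * Xq).
Proof.
move=> ha; rewrite /Xq -scalerAl (weight_commZ ha) -scalerAr.
by rewrite !scalerA mulrC.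
Qed.

Lemma weight_commXqinv i a : weight i a -> Xqinv * a = (lam i)^-1 *: (a * Xqinv).
Proof.
move=> ha; rewrite /Xqinv -scalerAl (weight_commZi ha) -scalerAr.
by rewrite !scalerA mulrC.
Qed.

Lemma weight_commXpow i a j : weight i a -> Xpow j * a = lam i ^ j *: (a * Xpow j).
Proof.
move=> ha; elim/int_rec: j => [|n IH|n IH].
- by rewrite Xpow0 expr0z mul1r mulr1 scale1r.
- rewrite -addn1 PoszD XpowS -mulrA IH -scalerAr [Xq * (a * _)]mulrA (weight_commXq ha).
  by rewrite -scalerAl scalerA expfzDr ?lam_neq0 // expr1z mulrC -mulrA.
- rewrite -addn1 PoszD opprD XpowP -mulrA IH -scalerAr [Xqinv * (a * _)]mulrA.
  rewrite (weight_commXqinv ha) -scalerAl scalerA.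
  by rewrite expfzDr ?lam_neq0 // exprN1 mulrC -mulrA.
Qed.
Lemma weight_comm_leval i a s : weight i a -> leval s * a = a * leval (dilate (lam i) s).
Proof.
move=> ha; rewrite /leval /dilate big_map mulr_suml mulr_sumr.
apply: eq_bigr => x _ /=.
by rewrite -scalerAl (weight_commXpow _ ha) -scalerAr scalerA mulrC.
Qed.

(* qZ = q^2 X, so that vu = P(q^2 X) *)
Lemma qZ_Xq : q *: Z = lam 1 *: Xq.
Proof. by rewrite lam1 /Xq scalerA expr2 -mulrA mulfV // mulr1. Qed.
Lemma qZi_Xqinv : q^-1 *: Zi = (lam 1)^-1 *: Xqinv.
Proof. by rewrite lam1 /Xqinv scalerA expr2 invfM -mulrA mulVf // mulr1. Qed.

Lemma lpeval_q m r :
  lpeval m r (q *: Z) (q^-1 *: Zi) = leval (dilate (lam 1) (lterms m r)).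
Proof. by rewrite qZ_Xq qZi_Xqinv lpeval_dilate ?lam_neq0. Qed.

Lemma uv_leval : u * v = leval (lterms l p).
Proof. by case: rels => _ _ _ -> _; rewrite -lpeval_terms. Qed.

Lemma vu_leval : v * u = leval (dilate (lam 1) (lterms l p)).
Proof. by case: rels => _ _ _ _ ->; rewrite lpeval_q. Qed.

Definition nf (L : seq (int * seq (int * C))) : A :=
  \sum_(x <- L) upow x.1 * leval x.2.
Definition spanned (a : A) : Prop := exists L, a = nf L.

Lemma nf_cat L L' : nf (L ++ L') = nf L + nf L'.
Proof. by rewrite /nf big_cat. Qed.

Lemma nf_seq1 i s : nf [:: (i, s)] = upow i * leval s.
Proof. by rewrite /nf big_seq1. Qed.

Lemma nf_scale a L :
  a *: nf L = nf [seq (x.1, scale_terms a x.2) | x <- L].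
Proof.
rewrite /nf big_map scaler_sumr; apply: eq_bigr => x _ /=.
by rewrite scalerAr leval_scale.
Qed.

Lemma nf_split0 L : nf L = leval (flatten [seq x.2 | x <- L & x.1 == 0])
  + \sum_(x <- L | x.1 != 0) upow x.1 * leval x.2.
Proof.
rewrite /nf (bigID (fun x => x.1 == 0)) /=; congr (_ + _).
rewrite /leval big_flatten /= big_map big_filter.
by apply: eq_bigr => x /eqP ->; rewrite mul1r.
Qed.

Lemma spanned_sum (I : Type) (s : seq I) (F : I -> A) :
  (forall x, spanned (F x)) -> spanned (\sum_(x <- s) F x).
Proof.
move=> h; elim: s => [|x s [L IH]]; first by exists [::]; rewrite /nf !big_nil.
by have [L0 E] := h x; exists (L0 ++ L); rewrite big_cons IH E nf_cat.
Qed.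

Lemma spanned_term i s : spanned (upow i * leval s).
Proof. by exists [:: (i, s)]; rewrite nf_seq1. Qed.

Lemma spanned_scale c a : spanned a -> spanned (c *: a).
Proof. by move=> [L ->]; rewrite nf_scale; eexists. Qed.

Lemma spanned1 : spanned 1.
Proof. by rewrite -Xpow0 -(leval_Xpow 0) -[leval _]mul1r; apply: (spanned_term 0). Qed.

Lemma spanned_leval s a : spanned a -> spanned (leval s * a).
Proof.
move=> [L ->]; rewrite mulr_sumr; apply: spanned_sum => x.
by rewrite mulrA (weight_comm_leval _ (weight_upow x.1)) -mulrA leval_mul; apply: spanned_term.
Qed.

Lemma spanned_mulZ a : spanned a -> spanned (Z * a).
Proof.
have -> : Z = q *: leval [:: (1, 1)].
  by rewrite leval_Xpow /Xpow /= expr1 /Xq scalerA mulfV // scale1r.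
by rewrite -scalerAl => h; apply/spanned_scale/spanned_leval.
Qed.

Lemma spanned_mulZi a : spanned a -> spanned (Zi * a).
Proof.
have -> : Zi = q^-1 *: leval [:: (-1, 1)].
  by rewrite leval_Xpow /Xpow /= expr1 /Xqinv scalerA mulVf // scale1r.
by rewrite -scalerAl => h; apply/spanned_scale/spanned_leval.
Qed.

Lemma spanned_mulu a : spanned a -> spanned (u * a).
Proof.
move=> [L ->]; rewrite mulr_sumr; apply: spanned_sum => -[[k|k] s] /=.
  by rewrite mulrA -exprS; apply: (spanned_term k.+1).
rewrite exprS !mulrA uv_leval.
have -> : v ^+ k = upow (- k%:Z) by case: k.
by rewrite (weight_comm_leval _ (weight_upow _)) -mulrA leval_mul; apply: spanned_term.
Qed.

Lemma spanned_mulv a : spanned a -> spanned (v * a).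
Proof.
move=> [L ->]; rewrite mulr_sumr; apply: spanned_sum => -[[[|k]|k] s] /=.
- by rewrite expr0 mul1r; exact: (spanned_term (Negz 0)).
- rewrite exprS !mulrA vu_leval -[u ^+ k]/(upow k).
  by rewrite (weight_comm_leval _ (weight_upow k)) -mulrA leval_mul; apply: spanned_term.
- by rewrite mulrA -exprS; apply: (spanned_term (Negz k.+1)).
Qed.

End Relations.

(* The universal property of A gives an induction principle: a property of
   elements that holds for the generators and is closed under the algebra
   operations holds everywhere.  Proof: the elements satisfying it form a
   subalgebra S; the universal map A -> S followed by the inclusion fixes the
   generators, hence is the identity. *)
Section Induction.
Variable R : realType.
Local Notation C := R[i].
Variables (q : C) (l : int) (p : {poly C}) (A : algType C) (u v Z Zi : A).
Hypothesis gwa : is_gwa q l p u v Z Zi.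
Variable M : A -> Prop.
Hypothesis M1 : M 1.
Hypothesis Mlin : forall (c : C) a b, M a -> M b -> M (c *: a + b).
Hypothesis Mmul : forall a b, M a -> M b -> M (a * b).
Hypotheses (Mu : M u) (Mv : M v) (MZ : M Z) (MZi : M Zi).

Definition in_M : pred A := fun a => `[< M a >].

Lemma in_M_subalg_closed : GRing.subalg_closed in_M.
Proof.
split; first exact/asboolP.
- by move=> c a b /asboolP ha /asboolP hb; apply/asboolP; apply: Mlin.
- by move=> a b /asboolP ha /asboolP hb; apply/asboolP; apply: Mmul.
Qed.

HB.instance Definition _ := GRing.isSubalgClosed.Build C A in_M in_M_subalg_closed.

Record subM := SubM { subM_val : A; _ : subM_val \in in_M }.
HB.instance Definition _ := [isSub for subM_val].
HB.instance Definition _ := [Choice of subM by <:].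
HB.instance Definition _ := [SubChoice_isSubAlgebra of subM by <:].

Lemma subM_val_alghom : is_alghom subM_val.
Proof. by split => [c x y||x y]; rewrite ?rmorph1. Qed.

Lemma gwa_ind a : M a.
Proof.
have in_gen (x : A) : M x -> x \in in_M by move=> hx; apply/asboolP.
pose u' := SubM (in_gen _ Mu); pose v' := SubM (in_gen _ Mv).
pose Z' := SubM (in_gen _ MZ); pose Zi' := SubM (in_gen _ MZi).
have sub_rels : gwa_rels q l p u' v' Z' Zi'.
  have [[[h1 h2] h3 h4 h5 h6] _] := gwa; have hv := subM_val_alghom.
  have val_eq (x y : subM) : subM_val x = subM_val y -> x = y by apply: val_inj.
  by split; first split; apply: val_eq;
    rewrite ?(alghom_lpeval hv, alghomM hv, alghomZ hv, alghom1 hv).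
have [rels univ] := gwa.
have [f [[hf fu fv fZ fZi] _]] := univ _ _ _ _ _ sub_rels.
have [f0 [_ f0_uniq]] := univ _ _ _ _ _ rels.
have id_a := f0_uniq _ (And5 (alghom_id A) erefl erefl erefl erefl) a.
have val_f_a : subM_val (f a) = f0 a.
  apply: (f0_uniq (subM_val \o f)).
  by split; rewrite /= ?fu ?fv ?fZ ?fZi //; apply: alghom_comp subM_val_alghom.
by rewrite /= in id_a; rewrite id_a -val_f_a; apply/asboolP; case: (f a).
Qed.

End Induction.

Lemma spanned_all (R : realType) (q : R[i]) (l : int) (p : {poly R[i]})
  (A : algType R[i]) (u v Z Zi : A) :
  q != 0 -> is_gwa q l p u v Z Zi -> forall a, spanned q u v Z Zi a.
Proof.
move=> q0 gwa; have [rels _] := gwa.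
pose M a := forall b, spanned q u v Z Zi b -> spanned q u v Z Zi (a * b).
suff hM : forall a, M a by move=> a; rewrite -[a]mulr1; apply/hM/spanned1.
apply: (gwa_ind gwa).
- by move=> b hb; rewrite mul1r.
- move=> c a a' ha ha' b hb; rewrite mulrDl -scalerAl.
  by have [L1 ->] := spanned_scale c (ha _ hb); have [L2 ->] := ha' _ hb;
    exists (L1 ++ L2); rewrite nf_cat.
- by move=> a a' ha ha' b hb; rewrite -mulrA; apply/ha/ha'.
- by move=> b; apply: (spanned_mulu q0 rels).
- by move=> b; apply: (spanned_mulv q0 rels).
- by move=> b; apply: (spanned_mulZ q0 rels).
- by move=> b; apply: (spanned_mulZi q0 rels).
Qed.

Lemma linform_eq_on_basis (R : realType) (q : R[i]) (l : int) (p : {poly R[i]})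
  (A : algType R[i]) (u v Z Zi : A) (T1 T2 : A -> R[i]) :
  q != 0 -> is_gwa q l p u v Z Zi -> is_linform T1 -> is_linform T2 ->
  (forall i j, T1 (upow u v i * Xpow q Z Zi j) = T2 (upow u v i * Xpow q Z Zi j)) ->
  forall a, T1 a = T2 a.
Proof.
move=> q0 gwa h1 h2 h a; have [L ->] := spanned_all q0 gwa a.
rewrite (linform_sum h1) (linform_sum h2); apply: eq_bigr => x _.
rewrite /leval !mulr_sumr (linform_sum h1) (linform_sum h2); apply: eq_bigr => y _.
by rewrite -!scalerAr (linformZ h1) (linformZ h2) h.
Qed.

Section Endomorphisms.
Variable R : realType.
Local Notation C := R[i].
Local Notation V := (int -> C).

Record lendo := Lendo {
  lapp :> V -> V;
  lappL : forall (c : C) (x y : V),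
    lapp (fun k => c * x k + y k) = fun k => c * lapp x k + lapp y k }.

HB.instance Definition _ := gen_eqMixin lendo.
HB.instance Definition _ := gen_choiceMixin lendo.

Lemma lendo_eq (e f : lendo) : (forall x k, e x k = f x k) -> e = f.
Proof.
case: e f => [e he] [f hf] /= h.
have ef : e = f by apply: funext => x; apply: funext => k; apply: h.
by subst f; rewrite (Prop_irrelevance he hf).
Qed.

Lemma lapp0 (e : lendo) : e (fun _ => 0) = fun _ => 0.
Proof.
have := lappL e 1 (fun _ => 0) (fun _ => 0).
have -> : (fun k : int => 1 * (fun _ => 0 : C) k + (fun _ => 0 : C) k) = (fun _ => 0).
  by apply: funext => k; rewrite mulr0 addr0.
move=> h; apply: funext => k; have := congr1 (fun F => F k) h.
by rewrite /= mul1r => hh; apply: (addrI (e (fun _ => 0) k)); rewrite addr0 -hh.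
Qed.

Lemma lappD (e : lendo) (x y : V) : e (fun k => x k + y k) = fun k => e x k + e y k.
Proof.
have -> : (fun k => x k + y k) = (fun k => 1 * x k + y k).
  by apply: funext => k; rewrite mul1r.
by rewrite lappL; apply: funext => k; rewrite mul1r.
Qed.

Lemma lappZ (e : lendo) (c : C) (x : V) : e (fun k => c * x k) = fun k => c * e x k.
Proof.
have -> : (fun k => c * x k) = (fun k => c * x k + (fun _ => 0) k).
  by apply: funext => k; rewrite addr0.
by rewrite lappL lapp0; apply: funext => k; rewrite addr0.
Qed.

Definition lzero : lendo.
Proof. by exists (fun _ _ => 0) => c x y; apply: funext => k; rewrite mulr0 addr0. Defined.
Definition lopp (e : lendo) : lendo.
Proof. by exists (fun x k => - e x k) => c x y; apply: funext => k; rewrite lappL mulrN opprD. Defined.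
Definition ladd (e f : lendo) : lendo.
Proof.
exists (fun x k => e x k + f x k) => c x y; apply: funext => k.
by rewrite !lappL mulrDr addrACA.
Defined.
Definition lone : lendo.
Proof. by exists (fun x => x). Defined.
Definition lmul (e f : lendo) : lendo.
Proof. by exists (fun x => e (f x)) => c x y; rewrite !lappL. Defined.
Definition lscale (a : C) (e : lendo) : lendo.
Proof.
exists (fun x k => a * e x k) => c x y; apply: funext => k.
by rewrite lappL mulrDr mulrCA.
Defined.

Lemma laddA : associative ladd.
Proof. by move=> e f g; apply: lendo_eq => x k /=; rewrite addrA. Qed.
Lemma laddC : commutative ladd.
Proof. by move=> e f; apply: lendo_eq => x k /=; rewrite addrC. Qed.
Lemma ladd0 : left_id lzero ladd.
Proof. by move=> e; apply: lendo_eq => x k /=; rewrite add0r. Qed.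
Lemma laddN : left_inverse lzero lopp ladd.
Proof. by move=> e; apply: lendo_eq => x k /=; rewrite addNr. Qed.

HB.instance Definition _ := GRing.isZmodule.Build lendo laddA laddC ladd0 laddN.

Lemma lmulA : associative lmul. Proof. by move=> e f g; apply: lendo_eq. Qed.
Lemma lmul1 : left_id lone lmul. Proof. by move=> e; apply: lendo_eq. Qed.
Lemma lmulr1 : right_id lone lmul. Proof. by move=> e; apply: lendo_eq. Qed.
Lemma lmulDl : left_distributive lmul (@GRing.add lendo).
Proof. by move=> e f g; apply: lendo_eq. Qed.
Lemma lmulDr : right_distributive lmul (@GRing.add lendo).
Proof. by move=> e f g; apply: lendo_eq => x k /=; rewrite lappD. Qed.
Lemma lone_neq0 : lone != 0.
Proof.
by apply/eqP => /(congr1 (fun e : lendo => e (fun _ => 1) 0)) /= /eqP; rewrite oner_eq0.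
Qed.

HB.instance Definition _ :=
  GRing.Zmodule_isNzRing.Build lendo lmulA lmul1 lmulr1 lmulDl lmulDr lone_neq0.

Lemma lscaleA a b e : lscale a (lscale b e) = lscale (a * b) e.
Proof. by apply: lendo_eq => x k /=; rewrite mulrA. Qed.
Lemma lscale1 : left_id 1 lscale.
Proof. by move=> e; apply: lendo_eq => x k /=; rewrite mul1r. Qed.
Lemma lscaleDr : right_distributive lscale (@GRing.add lendo).
Proof. by move=> a e f; apply: lendo_eq => x k /=; rewrite mulrDr. Qed.
Lemma lscaleDl e : {morph lscale^~ e : a b / a + b}.
Proof. by move=> a b; apply: lendo_eq => x k /=; rewrite mulrDl. Qed.

HB.instance Definition _ :=
  GRing.Zmodule_isLmodule.Build C lendo lscaleA lscale1 lscaleDr lscaleDl.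

Lemma lscaleAl a (e f : lendo) : a *: (e * f) = (a *: e) * f.
Proof. by apply: lendo_eq. Qed.
HB.instance Definition _ := GRing.Lmodule_isLalgebra.Build C lendo lscaleAl.
Lemma lscaleAr a (e f : lendo) : a *: (e * f) = e * (a *: f).
Proof. by apply: lendo_eq => x k /=; rewrite lappZ. Qed.
HB.instance Definition _ := GRing.Lalgebra_isAlgebra.Build C lendo lscaleAr.

Definition diag (d : int -> C) : lendo.
Proof.
exists (fun x k => d k * x k) => c x y; apply: funext => k.
by rewrite mulrDr mulrCA.
Defined.

Lemma diag_mul d e : diag d * diag e = diag (fun k => d k * e k).
Proof. by apply: lendo_eq => x k /=; rewrite mulrA. Qed.
Lemma diag_scale c d : c *: diag d = diag (fun k => c * d k).
Proof. by apply: lendo_eq => x k /=; rewrite mulrA. Qed.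
Lemma diag1 : 1 = diag (fun _ => 1).
Proof. by apply: lendo_eq => x k /=; rewrite mul1r. Qed.
Lemma diag_exp d n : diag d ^+ n = diag (fun k => d k ^+ n).
Proof.
elim: n => [|n IH]; first by rewrite expr0 diag1.
by rewrite exprS IH diag_mul; congr diag; apply: funext => k; rewrite exprS.
Qed.
Lemma diag_sum (I : Type) (s : seq I) (F : I -> int -> C) :
  \sum_(x <- s) diag (F x) = diag (fun k => \sum_(x <- s) F x k).
Proof.
elim: s => [|x s IH].
  by rewrite big_nil; apply: lendo_eq => y k /=; rewrite big_nil mul0r.
by rewrite big_cons IH; apply: lendo_eq => y k /=; rewrite big_cons mulrDl.
Qed.
Lemma diag_powz d m : (forall k, d k != 0) ->
  powz (diag d) (diag (fun k => (d k)^-1)) m = diag (fun k => d k ^ m).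
Proof.
by move=> hd; case: m => n /=; rewrite diag_exp //; congr diag; apply: funext => k; rewrite exprVn.
Qed.
Lemma diag_lpeval d m r : (forall k, d k != 0) ->
  lpeval m r (diag d) (diag (fun k => (d k)^-1)) = diag (fun k => d k ^ m * r.[d k]).
Proof.
move=> hd; rewrite /lpeval diag_powz // /peval.
have -> : \sum_(k < size r) r`_k *: diag d ^+ k = \sum_(k < size r) diag (fun j => r`_k * d j ^+ k).
  by apply: eq_bigr => k _; rewrite diag_exp diag_scale.
by rewrite diag_sum diag_mul; congr diag; apply: funext => j; rewrite horner_coef.
Qed.

End Endomorphisms.

Section Model.
Variable R : realType.
Local Notation C := R[i].
Variables (q : C) (l : int) (p : {poly C}).
Hypothesis q0 : q != 0.
Local Notation lam := (lam q).

Definition Zop : lendo R := diag lam.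
Definition Ziop : lendo R := diag (fun k => (lam k)^-1).
Definition uop : lendo R.
Proof. by exists (fun x k => x (k - 1)). Defined.
Definition vop : lendo R.
Proof.
exists (fun x k => (q * lam k) ^ l * p.[q * lam k] * x (k + 1)) => c x y.
by apply: funext => k; rewrite mulrDr mulrCA.
Defined.

Lemma lamS k : lam (k + 1) = lam k * q ^+ 2.
Proof. by rewrite (lam_add q0) lam1. Qed.

Lemma model_rels : gwa_rels q l p uop vop Zop Ziop.
Proof.
have lam0 k := lam_neq0 q0 k.
split; first split.
- by rewrite diag_mul diag1; congr diag; apply: funext => k; rewrite mulfV.
- by rewrite diag_mul diag1; congr diag; apply: funext => k; rewrite mulVf.
- apply: lendo_eq => x k /=; rewrite -{1}(subrK 1 k) lamS.
  by have := lam0 (k - 1); move: (lam (k - 1)) => a a0; field.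
- apply: lendo_eq => x k /=; rewrite lamS.
  have := lam0 k; move: (lam k) => a a0.
  by move: (_ * _.[_]) (x _) => b y; field; rewrite q0 a0.
- rewrite /Zop /Ziop !diag_scale.
  have -> : (fun k => q * (lam k)^-1) = (fun k => (q^-1 * lam k)^-1).
    by apply: funext => k; rewrite invfM invrK.
  rewrite diag_lpeval => [|k]; last by rewrite mulf_neq0 ?invr_eq0.
  apply: lendo_eq => x k /=; rewrite subrK.
  suff -> : q * lam (k - 1) = q^-1 * lam k by [].
  by rewrite -{2}(subrK 1 k) lamS; field.
- rewrite /Zop /Ziop !diag_scale.
  have -> : (fun k => q^-1 * (lam k)^-1) = (fun k => (q * lam k)^-1).
    by apply: funext => k; rewrite invfM.
  rewrite diag_lpeval => [|k]; last by rewrite mulf_neq0.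
  by apply: lendo_eq => x k /=; rewrite addrK.
Qed.

End Model.

(* Mapping A to the model: if L(X) = 0 in A then L vanishes at all the
   points q^{2k-1}, k in Z. *)
Lemma leval_eq0_values (R : realType) (q : R[i]) (l : int) (p : {poly R[i]})
  (A : algType R[i]) (u v Z Zi : A) : q != 0 -> is_gwa q l p u v Z Zi ->
  forall s, leval q Z Zi s = 0 ->
  forall k : int, \sum_(x <- s) x.2 * (q^-1 * lam q k) ^ x.1 = 0.
Proof.
move=> q0 [_ univ] s hs k.
have [f [[hf _ _ fZ fZi] _]] := univ _ _ _ _ _ (model_rels l p q0).
pose y j := q^-1 * lam q j.
have y0 j : y j != 0 by rewrite mulf_neq0 ?invr_eq0 ?lam_neq0.
have fXq : f (Xq q Z) = diag (fun j => y j).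
  by rewrite /Xq (alghomZ hf) fZ diag_scale.
have fXqinv : f (Xqinv q Zi) = diag (fun j => (y j)^-1).
  rewrite /Xqinv (alghomZ hf) fZi diag_scale; congr diag.
  by apply: funext => j; rewrite invfM invrK.
have : f (leval q Z Zi s) = diag (fun j => \sum_(x <- s) x.2 * y j ^ x.1).
  rewrite /leval (alghom_sum hf) -diag_sum; apply: eq_bigr => x _.
  by rewrite (alghomZ hf) /Xpow (alghom_powz hf) fXq fXqinv diag_powz // diag_scale.
rewrite hs (alghom0 hf) => /(congr1 (fun e : lendo R => e (fun _ => 1) k)) /=.
by rewrite mulr1 => <-.
Qed.

Lemma poly_inf_roots (F : idomainType) (Q : {poly F}) (y : nat -> F) :
  injective y -> (forall k, Q.[y k] = 0) -> Q = 0.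
Proof.
move=> iy hr; apply/eqP; apply/negP => /negP Q0.
have roots : all (root Q) [seq y k | k <- iota 0 (size Q)].
  by apply/allP => x /mapP[k _ ->]; apply/eqP; exact: hr.
have uniq_roots : uniq [seq y k | k <- iota 0 (size Q)].
  by rewrite map_inj_uniq ?iota_uniq.
by have := max_poly_roots Q0 roots uniq_roots; rewrite size_map size_iota ltnn.
Qed.

(* Multiply by a power
   of z to get an ordinary polynomial. *)
Lemma laurent_eq0 (F : fieldType) (y : nat -> F) (s : seq (int * F)) :
  injective y -> (forall k, y k != 0) ->
  (forall k, \sum_(x <- s) x.2 * y k ^ x.1 = 0) ->
  forall c : int -> F, \sum_(x <- s) x.2 * c x.1 = 0.
Proof.
move=> iy y0 hs c.
pose mu : int := - \sum_(x <- s) `|x.1|%:Z.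
have hmu x : x \in s -> mu <= x.1.
  move=> xs; rewrite /mu (big_rem x xs) /=.
  have : 0 <= \sum_(j <- rem x s) `|j.1|%:Z by apply: sumr_ge0.
  move: (\sum_(j <- rem x s) _) => S.
  by case: x {xs} => [[n|n] a] /=; rewrite ?NegzE; lia.
pose e (x : int * F) := `|x.1 - mu|%N.
have he x : x \in s -> x.1 = mu + (e x)%:Z.
  by move=> /hmu hx; rewrite /e gez0_abs ?subr_ge0 // addrCA subrr addr0.
pose Q : {poly F} := \sum_(x <- s) x.2 *: 'X^(e x).
have Q0 : Q = 0.
  apply: (poly_inf_roots iy) => k; rewrite /Q horner_sum.
  suff -> : \sum_(x <- s) (x.2 *: 'X^(e x)).[y k] =
            y k ^ (- mu) * \sum_(x <- s) x.2 * y k ^ x.1 by rewrite hs mulr0.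
  rewrite mulr_sumr big_seq_cond [RHS]big_seq_cond; apply: eq_bigr => x /andP[xs _].
  rewrite hornerZ hornerXn (he x xs) expfzDr // [y k ^ (- mu) * _]mulrCA.
  by rewrite [_ * (y k ^ mu * _)]mulrA -expfzDr // addNr expr0z mul1r.
pose B := (\sum_(x <- s) e x).+1.
have heB x : x \in s -> (e x < B)%N.
  by move=> xs; rewrite /B ltnS (big_rem x xs) /= leq_addr.
have : \sum_(i < B) Q`_i * c (mu + i%:Z) = 0.
  by rewrite Q0; apply: big1 => i _; rewrite coef0 mul0r.
rewrite /Q; under eq_bigr do rewrite coef_sum mulr_suml.
move=> H; apply: eq_trans H.
rewrite exchange_big /= big_seq [RHS]big_seq; apply: eq_bigr => x xs.
rewrite (bigD1 (Ordinal (heB x xs))) //= coefZ coefXn eqxx mulr1.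
rewrite big1 ?addr0 -?(he x xs) // => i /negbTE ne; rewrite coefZ coefXn.
suff -> : (i : nat) == e x = false by rewrite mulr0 mul0r.
by apply/negbTE; apply: contraFN ne => /eqP ei; apply/eqP; apply: val_inj.
Qed.

Lemma lam_eq1 (R : realType) (q : R[i]) (i : int) :
  0 < `|q| < 1 -> lam q i = 1 -> i = 0.
Proof.
move=> /andP[qn0 q1]; have q0 : q != 0 by rewrite -normr_gt0.
have pow_eq1 (n : nat) : q ^+ n = 1 -> n = 0%N.
  case: n => [//|n] e.
  have : `|q| ^+ n.+1 < 1 by rewrite exprn_ilt1 // ltW.
  by rewrite -normrX e normr1 ltxx.
rewrite /lam; case: i => n.
  by rewrite -PoszM => /pow_eq1 /eqP; rewrite muln_eq0 => /eqP ->.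
have -> : 2 * Negz n = - (2 * n.+1)%N%:Z by rewrite NegzE; lia.
rewrite -exprnN => /(congr1 GRing.inv); rewrite invrK invr1.
by move=> /pow_eq1 /eqP; rewrite muln_eq0.
Qed.

Lemma lam_inj (R : realType) (q : R[i]) : 0 < `|q| < 1 -> injective (lam q).
Proof.
move=> hq i j eij; have q0 : q != 0 by case/andP: hq; rewrite normr_gt0.
have : lam q (i - j) = 1 by rewrite (lam_add q0) eij -(lam_add q0) subrr lam0.
by move/(lam_eq1 hq)/eqP; rewrite subr_eq0 => /eqP.
Qed.

Section WeightZeroPart.
Variable R : realType.
Local Notation C := R[i].
Variables (q : C) (l : int) (p : {poly C}) (A : algType C) (u v Z Zi : A).
Hypothesis hq : 0 < `|q| < 1.
Hypothesis gwa : is_gwa q l p u v Z Zi.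

Let q0 : q != 0. Proof. by case/andP: hq; rewrite normr_gt0. Qed.
Let rels : gwa_rels q l p u v Z Zi. Proof. by case: gwa. Qed.

Local Notation leval := (leval q Z Zi).
Local Notation Xpow := (Xpow q Z Zi).
Local Notation weight := (weight q Z Zi).
Local Notation lam := (lam q).
Local Notation upow := (upow u v).
Local Notation nf := (nf q u v Z Zi).

(* a weight-i0 vector that is a sum of vectors of weights different from
   i0 is zero; induction on the number of summands, applying Z . Z^-1 -
   q^{2 i1} to eliminate the first one *)
Lemma weight_vectors_indep (L : seq (int * A)) i0 e0 : weight i0 e0 ->
  (forall x, x \in L -> weight x.1 x.2 /\ x.1 != i0) ->
  e0 = \sum_(x <- L) x.2 -> e0 = 0.
Proof.
have [n] := ubnP (size L); elim: n L e0 => // n IH [|[i1 e1] L] e0 hsz h0 hL.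
  by rewrite big_nil.
rewrite big_cons /= => E.
have [h1 ne1] := hL _ (mem_head _ _).
have hL' x : x \in L -> weight x.1 x.2 /\ x.1 != i0.
  by move=> xL; apply: hL; rewrite inE xL orbT.
pose L' := [seq (x.1, (lam x.1 - lam i1) *: x.2) | x <- L].
have key : (lam i0 - lam i1) *: e0 = \sum_(x <- L') x.2.
  rewrite /L' big_map /= scalerBl -[lam i0 *: e0]h0 E mulrDr mulrDl h1.
  rewrite mulr_sumr mulr_suml scalerDr scaler_sumr.
  have -> : \sum_(x <- L) Z * x.2 * Zi = \sum_(x <- L) lam x.1 *: x.2.
    by rewrite big_seq [RHS]big_seq; apply: eq_bigr => x /hL' [].
  rewrite opprD addrACA subrr add0r -sumrB.
  by apply: eq_bigr => x _; rewrite scalerBl.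
have : (lam i0 - lam i1) *: e0 = 0.
  apply: (IH L' _ _ _ _ key); first by rewrite /L' size_map; move: hsz; rewrite ltnS.
    exact: weight_scale.
  move=> x /mapP[y /hL' [hy ny] ->] /=.
  by split => //; apply: weight_scale.
move/eqP; rewrite scaler_eq0 subr_eq0 => /orP[/eqP /(lam_inj hq) e|/eqP //].
by move: ne1; rewrite e eqxx.
Qed.

(* pairing of the terms of a Laurent polynomial with c : Z -> C, i.e. the
   value on L(X) of the linear form X^j |-> c j, and the same for the
   weight-0 part of a normal form *)
Definition pairing (c : int -> C) (s : seq (int * C)) : C := \sum_(x <- s) x.2 * c x.1.
Definition pairing0 (c : int -> C) (L : seq (int * seq (int * C))) : C :=
  \sum_(x <- L | x.1 == 0) pairing c x.2.

Lemma pairing_eq0 s c : leval s = 0 -> pairing c s = 0.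
Proof.
move=> hs; pose y (k : nat) := q^-1 * lam k%:Z.
apply: (laurent_eq0 (y := y)) => [k k'|k|k]; last exact: (leval_eq0_values q0 gwa).
  by move/(mulfI (invr_neq0 q0))/(lam_inj hq)/eqP; rewrite eqz_nat => /eqP.
by rewrite mulf_neq0 ?invr_eq0 ?lam_neq0.
Qed.

Lemma pairing0_eq0 (L : seq (int * seq (int * C))) (K : seq (int * A)) c :
  (forall x, x \in K -> weight x.1 x.2 /\ x.1 != 0) ->
  nf L = \sum_(x <- K) x.2 -> pairing0 c L = 0.
Proof.
move=> hK E.
pose s0 := flatten [seq x.2 | x <- L & x.1 == 0].
have s0_eq0 : leval s0 = 0.
  pose K' := K ++ [seq (x.1, - (upow x.1 * leval x.2)) | x <- L & x.1 != 0].
  apply: (weight_vectors_indep (L := K') (i0 := 0)); first exact: (weight_leval q0 rels).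
    move=> x; rewrite mem_cat => /orP[/hK //|/mapP[y]].
    rewrite mem_filter => /andP[ny _] -> /=; split => //.
    rewrite -scaleN1r; apply: weight_scale; rewrite -{1}(addr0 y.1).
    exact: (weight_mul q0 rels (weight_upow q0 rels y.1) (weight_leval q0 rels _)).
  by rewrite /K' big_cat /= big_map big_filter sumrN -E nf_split0 addrK.
have := pairing_eq0 c s0_eq0.
by rewrite /pairing big_flatten /= big_map big_filter.
Qed.

Lemma nf_eq_pairing0 L L' c : nf L = nf L' -> pairing0 c L = pairing0 c L'.
Proof.
pose negL := [seq (x.1, scale_terms (-1) x.2) | x <- L'].
have nf_neg : nf negL = - nf L' by rewrite -nf_scale scaleN1r.
have pairing0_neg : pairing0 c negL = - pairing0 c L'.
  rewrite /pairing0 big_map -sumrN; apply: eq_bigr => x _ /=.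
  rewrite /pairing /scale_terms big_map -sumrN; apply: eq_bigr => y _ /=.
  by rewrite mulN1r mulNr.
move=> E; apply/eqP; rewrite -subr_eq0 -pairing0_neg -big_cat /=.
apply/eqP/(pairing0_eq0 (K := [::])) => //.
by rewrite big_nil nf_cat nf_neg E subrr.
Qed.

Variable c : int -> C.

(* the linear form with T(u^i L(X)) = [i = 0] pairing c L; well defined by
   the previous lemma since every element has a normal form *)
Definition trace_of (a : A) : C :=
  pairing0 c (proj1_sig (cid (spanned_all q0 gwa a))).

Lemma trace_ofE L : trace_of (nf L) = pairing0 c L.
Proof.
by rewrite /trace_of; case: cid => L' /= E; apply: nf_eq_pairing0.
Qed.

Lemma trace_of_lin : is_linform trace_of.
Proof.
move=> a x y.
have [L ->] := spanned_all q0 gwa x; have [L' ->] := spanned_all q0 gwa y.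
rewrite nf_scale -nf_cat !trace_ofE /pairing0 big_cat /= big_map mulr_sumr; congr (_ + _).
apply: eq_bigr => z _; rewrite /pairing /scale_terms big_map mulr_sumr.
by apply: eq_bigr => w _ /=; rewrite mulrA.
Qed.

Lemma trace_of_Xpow j : trace_of (Xpow j) = c j.
Proof.
rewrite -(leval_Xpow q Z Zi j) -[leval _]mul1r -(nf_seq1 q u v Z Zi 0) trace_ofE.
by rewrite /pairing0 big_cons big_nil /= addr0 /pairing big_seq1 mul1r.
Qed.

Lemma trace_of_weight i a : i != 0 -> weight i a -> trace_of a = 0.
Proof.
move=> i0 ha; have [L EL] := spanned_all q0 gwa a.
rewrite EL trace_ofE; apply: (pairing0_eq0 (K := [:: (i, a)])).
  by move=> x; rewrite inE => /eqP -> /=.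
by rewrite big_seq1 -EL.
Qed.

End WeightZeroPart.

Section Characterization.
Variable R : realType.
Local Notation C := R[i].
Variables (q : C) (l : int) (p : {poly C}) (A : algType C) (u v Z Zi : A).
Variables (t : C) (g : A -> A).
Hypothesis hq : 0 < `|q| < 1.
Hypothesis gwa : is_gwa q l p u v Z Zi.
Hypothesis t0 : t != 0.
Hypothesis hg : is_gt t u v Z Zi g.

Let q0 : q != 0. Proof. by case/andP: hq; rewrite normr_gt0. Qed.
Let rels : gwa_rels q l p u v Z Zi. Proof. by case: gwa. Qed.

Local Notation Xpow := (Xpow q Z Zi).
Local Notation weight := (weight q Z Zi).
Local Notation lam := (lam q).
Local Notation upow := (upow u v).

Definition cond_elt (m : int) (r : {poly C}) : A :=
  lpeval l p (q^-1 *: Z) (q *: Zi) * lpeval m r (q^-1 *: Z) (q *: Zi)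
  - t *: (lpeval l p (q *: Z) (q^-1 *: Zi) * lpeval m r (q *: Z) (q^-1 *: Zi)).

Lemma cond_eltE m r :
  cond_elt m r = u * v * lpeval m r (Xq q Z) (Xqinv q Zi)
                 - t *: (v * u * lpeval m r (q *: Z) (q^-1 *: Zi)).
Proof. by rewrite /cond_elt; case: rels => _ _ _ <- <-. Qed.

(* a twisted trace kills the weight spaces of nonzero weight:
   T(a) = T(Z a Z^-1) = q^{2i} T(a) *)
Lemma twisted_trace_weight (T : A -> C) i a :
  is_twisted_trace g T -> i != 0 -> weight i a -> T a = 0.
Proof.
move=> [hT htr] i0 ha.
have : T (Z * (a * Zi)) = T a.
  by rewrite htr; case: hg => _ _ _ -> _; rewrite -mulrA (ZiZ rels) mulr1.
rewrite mulrA ha (linformZ hT) => /eqP.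
rewrite -subr_eq0 -{2}[T a]mul1r -mulrBl mulf_eq0 subr_eq0 => /orP[/eqP|/eqP //].
by rewrite -(lam0 q) => /(lam_inj hq) /eqP; rewrite (negPf i0).
Qed.

(* a twisted trace satisfies the condition: move u from the front to the back *)
Lemma twisted_trace_cond (T : A -> C) m r :
  is_twisted_trace g T -> T (cond_elt m r) = 0.
Proof.
case=> hT htr; rewrite cond_eltE (linformB hT) (linformZ hT) -mulrA htr.
have -> : g u = t *: u by case: hg.
rewrite -scalerAr (linformZ hT) -[v * u * _]mulrA -[v * _ * u]mulrA.
have -> : lpeval m r (Xq q Z) (Xqinv q Zi) * u = u * lpeval m r (q *: Z) (q^-1 *: Zi).
  by rewrite (lpeval_terms q0 rels) (lpeval_q q0 rels) (weight_comm_leval q0 rels _ (weight_u rels)).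
by rewrite subrr.
Qed.

Section Converse.
Variable T : A -> C.
Hypothesis hT : is_linform T.
Hypothesis T_weight : forall i a, i != 0 -> weight i a -> T a = 0.
Hypothesis T_cond : forall m r, T (cond_elt m r) = 0.

Lemma T_uv j : T (u * v * Xpow j) = t * lam 1 ^ j * T (v * u * Xpow j).
Proof.
have := T_cond j 1; rewrite cond_eltE !lpeval_1 (qZ_Xq Z q0) (qZi_Xqinv Zi q0).
rewrite powz_dilate ?lam_neq0 // -scalerAr scalerA (linformB hT) (linformZ hT).
by move/eqP; rewrite subr_eq0 => /eqP.
Qed.

Let T_mulr b : is_linform (fun a => T (a * b)) := linform_mulr hT b.
Let T_mull b : is_linform (fun a => T (b * a)) := linform_mull hT b.

(* T(a b) = T(b g(a)) for each generator a, checked on the basis u^i X^j: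
   both sides vanish unless the weight of a b is 0 *)
Lemma T_swap_u b : T (u * b) = T (b * g u).
Proof.
have -> : g u = t *: u by case: hg.
move: b; apply: (linform_eq_on_basis q0 gwa (T_mull _) (T_mulr _)) => i j /=.
rewrite -scalerAr (linformZ hT).
have w := weight_mul q0 rels (weight_upow q0 rels i) (weight_Xpow q0 rels j).
rewrite addr0 in w.
case: (eqVneq i (-1)) => [->|ne].
  rewrite [upow _]/= mulrA T_uv -[v * _ * u]mulrA.
  rewrite (weight_commXpow q0 rels _ (weight_u rels)) -scalerAr (linformZ hT).
  by rewrite !mulrA.
have nz1 : 1 + i != 0 by apply: contra ne => /eqP e; apply/eqP; lia.
have nz2 : i + 1 != 0 by rewrite addrC.
rewrite (T_weight nz1 (weight_mul q0 rels (weight_u rels) w)).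
by rewrite (T_weight nz2 (weight_mul q0 rels w (weight_u rels))) mulr0.
Qed.

Lemma T_swap_v b : T (v * b) = T (b * g v).
Proof.
have -> : g v = t^-1 *: v by case: hg.
move: b; apply: (linform_eq_on_basis q0 gwa (T_mull _) (T_mulr _)) => i j /=.
rewrite -scalerAr (linformZ hT).
have w := weight_mul q0 rels (weight_upow q0 rels i) (weight_Xpow q0 rels j).
rewrite addr0 in w.
case: (eqVneq i 1) => [->|ne].
  rewrite [upow _]/= -[u * _ * v]mulrA.
  rewrite (weight_commXpow q0 rels _ (weight_v rels)) -scalerAr (linformZ hT).
  rewrite [u * (v * _)]mulrA T_uv [v * (u * _)]mulrA; move: (T _) => x.
  have lam_inv : lam (-1) ^ j * lam 1 ^ j = 1.
    by rewrite -expfzMl lamN1 lam1 mulVf ?expf_neq0 // exp1rz.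
  have -> : t^-1 * (lam (-1) ^ j * (t * lam 1 ^ j * x)) =
            (t^-1 * t) * (lam (-1) ^ j * lam 1 ^ j) * x by ring.
  by rewrite lam_inv mulVf // !mul1r.
have nz1 : -1 + i != 0 by apply: contra ne => /eqP e; apply/eqP; lia.
have nz2 : i + -1 != 0 by rewrite addrC.
rewrite (T_weight nz1 (weight_mul q0 rels (weight_v rels) w)).
by rewrite (T_weight nz2 (weight_mul q0 rels w (weight_v rels))) mulr0.
Qed.

Lemma T_swap_Z b : T (Z * b) = T (b * g Z).
Proof.
have -> : g Z = Z by case: hg.
move: b; apply: (linform_eq_on_basis q0 gwa (T_mull _) (T_mulr _)) => i j /=.
have w := weight_mul q0 rels (weight_upow q0 rels i) (weight_Xpow q0 rels j).
rewrite addr0 in w; rewrite (weight_commZ rels w) (linformZ hT).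
case: (eqVneq i 0) => [->|i0]; first by rewrite lam0 mul1r.
have w' := weight_mul q0 rels w (weight_Z rels); rewrite addr0 in w'.
by rewrite (T_weight i0 w') mulr0.
Qed.

Lemma T_swap_Zi b : T (Zi * b) = T (b * g Zi).
Proof.
have -> : g Zi = Zi by case: hg.
move: b; apply: (linform_eq_on_basis q0 gwa (T_mull _) (T_mulr _)) => i j /=.
have w := weight_mul q0 rels (weight_upow q0 rels i) (weight_Xpow q0 rels j).
rewrite addr0 in w; rewrite (weight_commZi q0 rels w) (linformZ hT).
case: (eqVneq i 0) => [->|i0]; first by rewrite lam0 invr1 mul1r.
have w' := weight_mul q0 rels w (weight_Zi rels); rewrite addr0 in w'.
by rewrite (T_weight i0 w') mulr0.
Qed.

(* the set of a with T(a b) = T(b g(a)) for all b contains the generators and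
   is a subalgebra, since g is an algebra homomorphism *)
Lemma twisted_trace_of_cond : is_twisted_trace g T.
Proof.
have ghom : is_alghom g by case: hg.
split => //; apply: (gwa_ind gwa (M := fun a => forall b, T (a * b) = T (b * g a))).
- by move=> b; rewrite (alghom1 ghom) mul1r mulr1.
- move=> c a a' ha ha' b.
  rewrite mulrDl -scalerAl hT ha ha' (alghomD ghom) (alghomZ ghom).
  by rewrite mulrDr -scalerAr hT.
- by move=> a a' ha ha' b; rewrite -mulrA ha -mulrA ha' (alghomM ghom) mulrA.
- exact: T_swap_u.
- exact: T_swap_v.
- exact: T_swap_Z.
- exact: T_swap_Zi.
Qed.

End Converse.

End Characterization.

Section Recurrence.
Variable F : fieldType.
Variables (p : {poly F}) (N : nat).
Hypothesis sizeE : size p = N.+1.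
Hypothesis p0 : p`_0 != 0.

Definition rec_sum (d : int -> F) (s : int) : F :=
  \sum_(k <- iota 0 (size p)) p`_k * d (s + k%:Z).
Definition is_rec (d : int -> F) : Prop := forall s, rec_sum d s = 0.

Lemma pN0 : p`_N != 0.
Proof.
have : p != 0 by rewrite -size_poly_gt0 sizeE.
by rewrite -lead_coef_eq0 /lead_coef sizeE.
Qed.

Lemma is_rec_comb (I : finType) (d : int -> F) (a : I -> F) (e : I -> int -> F) :
  is_rec d -> (forall k, is_rec (e k)) ->
  is_rec (fun j => d j - \sum_k a k * e k j).
Proof.
move=> hd he s; rewrite /rec_sum.
under eq_bigr do rewrite mulrBr mulr_sumr.
rewrite sumrB exchange_big /= [X in _ - X]big1 => [|k _]; first by rewrite subr0; apply: hd.
rewrite (eq_bigr (fun i => a k * (p`_i * e k (s + i%:Z)))) => [|i _]; last first.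
  by rewrite mulrCA.
by rewrite -mulr_sumr; have := he k s; rewrite /rec_sum => ->; rewrite mulr0.
Qed.

Lemma rec_sum_last d s :
  rec_sum d s = \sum_(k <- iota 0 N) p`_k * d (s + k%:Z) + p`_N * d (s + N%:Z).
Proof. by rewrite /rec_sum sizeE -addn1 iotaD big_cat /= big_seq1 add0n. Qed.

Lemma rec_sum_first d s :
  rec_sum d s = p`_0 * d s + \sum_(k <- iota 1 N) p`_k * d (s + k%:Z).
Proof. by rewrite /rec_sum sizeE /= big_cons addr0. Qed.

Lemma rec_uniq d (b : int) : is_rec d ->
  (forall i, (i < N)%N -> d (b + i%:Z) = 0) -> forall j, d j = 0.
Proof.
move=> hr h0.
have fwd (i : nat) : d (b + i%:Z) = 0.
  elim/ltn_ind: i => i IH; case: (ltnP i N) => [/h0 //|iN].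
  have := hr (b + (i - N)%:Z); rewrite rec_sum_last big_seq big1 => [|k].
    rewrite add0r -addrA -PoszD subnK // => /eqP.
    by rewrite mulf_eq0 (negPf pN0) => /eqP.
  rewrite mem_iota add0n => /andP[_ kN].
  by rewrite -addrA -PoszD IH ?mulr0 //; lia.
have bwd (i : nat) : d (b - 1 - i%:Z) = 0.
  elim/ltn_ind: i => i IH.
  have := hr (b - 1 - i%:Z); rewrite rec_sum_first big_seq big1 => [|k].
    by rewrite addr0 => /eqP; rewrite mulf_eq0 (negPf p0) => /eqP.
  rewrite mem_iota => /andP[k1 kN]; case: (leqP k i) => ki.
    have -> : b - 1 - i%:Z + k%:Z = b - 1 - (i - k)%N%:Z by lia.
    by rewrite IH ?mulr0 //; lia.
  have -> : b - 1 - i%:Z + k%:Z = b + (k - i.+1)%N%:Z by lia.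
  by rewrite fwd mulr0.
move=> j; case: (lerP b j) => hj.
  by have -> : j = b + `|(j - b)%R|%N%:Z by lia.
by have -> : j = b - 1 - `|(b - 1 - j)%R|%N%:Z by lia.
Qed.

(* Existence: a window of N consecutive values, stored as w : nat -> F,
   is moved one step forward by step_fwd (computing the next value from the
   recurrence) and backward by step_bwd (computing the previous one); since
   step_fwd undoes step_bwd, the iterates window j, j in Z, are consistent. *)
Section Existence.
Variable M : nat.
Hypothesis NM : N = M.+1.

Definition next_val (y : nat -> F) : F := - (\sum_(k <- iota 0 N) p`_k * y k) / p`_N.
Definition prev_val (y : nat -> F) : F := - (\sum_(k <- iota 1 N) p`_k * y k.-1) / p`_0.
Definition step_fwd (y : nat -> F) : nat -> F :=
  fun i => if (i.+1 < N)%N then y i.+1 else if i.+1 == N then next_val y else y i.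
Definition step_bwd (y : nat -> F) : nat -> F :=
  fun i => if i == 0%N then prev_val y else if (i < N)%N then y i.-1 else y i.

Lemma iota0N : iota 0 N = 0%N :: iota 1 M.
Proof. by rewrite NM. Qed.
Lemma iota1N : iota 1 N = iota 1 M ++ [:: M.+1].
Proof. by rewrite NM -(addn1 M) iotaD add1n addn1. Qed.

Lemma step_fwdK y : step_fwd (step_bwd y) = y.
Proof.
apply: funext => i; rewrite /step_fwd.
case: ifP => [iN|/negbT iN1]; first by rewrite /step_bwd /= iN.
case: ifP => [/eqP iN|/negbT iN].
  have iM : i = M by rewrite NM in iN; case: iN.
  subst i; rewrite /next_val iota0N big_cons /step_bwd /=.
  have -> : \sum_(j <- iota 1 M) p`_j *
      (if j == 0%N then prev_val y else if (j < N)%N then y j.-1 else y j)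
      = \sum_(j <- iota 1 M) p`_j * y j.-1.
    rewrite big_seq [RHS]big_seq; apply: eq_bigr => j.
    rewrite mem_iota => /andP[j1 jM].
    have -> : (j == 0%N) = false by case: j j1 {jM}.
    by have -> : (j < N)%N by rewrite NM; lia.
  rewrite /prev_val iota1N big_cat big_seq1 /=.
  have := pN0; rewrite NM => pN.
  by move: (\sum_(j <- iota 1 M) _) => S; field; rewrite pN p0.
rewrite /step_bwd; have -> : (i == 0%N) = false by apply/negbTE; rewrite NM in iN iN1 *; lia.
by have -> : (i < N)%N = false by apply/negbTE; rewrite NM in iN iN1 *; lia.
Qed.

Variable w : nat -> F.

Definition window (j : int) : nat -> F :=
  match j with Posz n => iter n step_fwd w | Negz n => iter n.+1 step_bwd w end.

Lemma windowS j : window (j + 1) = step_fwd (window j).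
Proof.
case: j => [n|[|n]]; first by rewrite -PoszD addn1.
  by rewrite /= step_fwdK.
have -> : Negz n.+1 + 1 = Negz n by rewrite !NegzE; lia.
by rewrite [window (Negz n.+1)]/= step_fwdK.
Qed.

Lemma window_shift (k : nat) j : (k < N)%N -> window (j + k%:Z) 0%N = window j k.
Proof.
elim: k j => [|k IH] j hk; first by rewrite addr0.
have -> : j + k.+1%:Z = (j + 1) + k%:Z by lia.
by rewrite IH; [rewrite windowS /step_fwd hk | lia].
Qed.

(* the sequence reading the first entry of the windows solves the
   recurrence and takes the values w 0, ..., w (N-1) from position b on *)
Lemma rec_exists (b : int) :
  exists d, is_rec d /\ forall i, (i < N)%N -> d (b + i%:Z) = w i.
Proof.
exists (fun j => window (j - b) 0%N); split; last first.
  by move=> i hi; rewrite (_ : b + i%:Z - b = 0 + i%:Z) ?window_shift //; lia.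
move=> s; rewrite rec_sum_last.
have -> : \sum_(k <- iota 0 N) p`_k * window (s + k%:Z - b) 0%N =
          \sum_(k <- iota 0 N) p`_k * window (s - b) k.
  rewrite big_seq [RHS]big_seq; apply: eq_bigr => k; rewrite mem_iota add0n => kN.
  by rewrite -(window_shift (s - b) kN) (_ : s + k%:Z - b = s - b + k%:Z) //; lia.
have -> : s + N%:Z - b = (s - b + 1) + M%:Z by rewrite NM; lia.
rewrite window_shift ?NM // windowS /step_fwd NM ltnn eqxx -NM.
rewrite /next_val; have := pN0; move: (p`_N) => a a0.
by field.
Qed.

End Existence.

End Recurrence.

Section Dimension.
Variable R : realType.
Local Notation C := R[i].
Variables (q : C) (l : int) (p : {poly C}) (A : algType C) (u v Z Zi : A).
Variables (t : C) (g : A -> A).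
Hypothesis hq : 0 < `|q| < 1.
Hypothesis p0 : p`_0 != 0.
Hypothesis size_p : (1 < size p)%N.
Hypothesis gwa : is_gwa q l p u v Z Zi.
Hypothesis t0 : t != 0.
Hypothesis hg : is_gt t u v Z Zi g.

Let q0 : q != 0. Proof. by case/andP: hq; rewrite normr_gt0. Qed.
Let rels : gwa_rels q l p u v Z Zi. Proof. by case: gwa. Qed.

Local Notation Xpow := (Xpow q Z Zi).
Local Notation lam := (lam q).
Local Notation N := (size p).-1.
Local Notation trace_of := (trace_of hq gwa).

(* the factor 1 - t q^{2j} by which T(X^j) enters the condition *)
Definition dfac (j : int) : C := 1 - t * lam 1 ^ j.

(* c : Z -> C are the values T(X^j) of a twisted trace *)
Definition twisted_cond (c : int -> C) : Prop :=
  is_rec p (fun j => dfac j * c j).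

Lemma trace_cond_eltE (T : A -> C) m r : is_linform T ->
  T (cond_elt q l p Z Zi t m r) = \sum_(i <- iota 0 (size r))
    r`_i * rec_sum p (fun j => dfac j * T (Xpow j)) (l + m + i%:Z).
Proof.
move=> hT; rewrite /cond_elt -[q^-1 *: Z]/(Xq q Z) -[q *: Zi]/(Xqinv q Zi).
rewrite !(lpeval_terms q0 rels) !(lpeval_q q0 rels) !(leval_mul q0 rels).
rewrite (linformB hT) (linformZ hT) /leval !(linform_sum hT) /terms_mul.
rewrite !big_allpairs_dep /lterms /dilate -!map_comp !big_map.
under [RHS]eq_bigr do rewrite /rec_sum mulr_sumr.
rewrite [RHS]exchange_big mulr_sumr -sumrB; apply: eq_bigr => k _ /=.
rewrite !big_map mulr_sumr -sumrB; apply: eq_bigr => i _ /=.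
rewrite !(linformZ hT) (_ : l + m + i%:Z + k%:Z = l + k%:Z + (m + i%:Z)); last by lia.
rewrite /dfac [lam 1 ^ (l + k%:Z + _)]expfzDr ?lam_neq0 //.
by ring.
Qed.

(* the values of a twisted trace satisfy the condition (take r = 1) *)
Lemma twisted_trace_values (T : A -> C) :
  is_twisted_trace g T -> twisted_cond (fun j => T (Xpow j)).
Proof.
move=> htr s; have := twisted_trace_cond hq gwa hg (s - l) 1 htr.
rewrite (trace_cond_eltE _ _ htr.1) size_poly1 big_seq1 coefC /= mul1r.
by rewrite addr0 addrC subrK.
Qed.

Lemma trace_of_twisted c : twisted_cond c -> is_twisted_trace g (trace_of c).
Proof.
move=> hc; have hT := trace_of_lin hq gwa c.
apply: (twisted_trace_of_cond hq gwa t0 hg hT); first exact: trace_of_weight.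
move=> m r; rewrite trace_cond_eltE // big1 // => i _.
suff -> : (fun j => dfac j * trace_of c (Xpow j)) = (fun j => dfac j * c j).
  by rewrite hc mulr0.
by apply: funext => j; rewrite trace_of_Xpow.
Qed.

Lemma dfac_inj j j' : dfac j = 0 -> dfac j' = 0 -> j = j'.
Proof.
rewrite /dfac => /eqP; rewrite subr_eq0 => /eqP e /eqP; rewrite subr_eq0 => /eqP e'.
apply: (lam_inj hq); rewrite -(lam1_exp q j) -(lam1_exp q j'); apply: (mulfI t0).
by rewrite -e -e'.
Qed.

Definition jt : int :=
  if pselect (exists j, dfac j = 0) is left H then proj1_sig (cid H) else 0.

Lemma dfac_eq0 j : dfac j = 0 -> j = jt.
Proof.
move=> hj; rewrite /jt; case: pselect => [H|nH]; last by case: nH; exists j.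
by case: (cid H) => j' hj' /=; apply: dfac_inj.
Qed.

Lemma sizeE : size p = N.+1.
Proof. by rewrite prednK //; apply: leq_trans size_p. Qed.
Lemma N_gt0 : (0 < N)%N.
Proof. by rewrite -ltnS -sizeE. Qed.

(* a solution of the condition vanishing at jt, ..., jt + N - 1 is zero:
   dfac * c solves the recurrence, and c jt = 0 covers the possible zero of
   dfac *)
Lemma twisted_cond_uniq c : twisted_cond c ->
  (forall i, (i < N)%N -> c (jt + i%:Z) = 0) -> forall j, c j = 0.
Proof.
move=> hc hi j.
have hd : forall j, dfac j * c j = 0.
  by apply: (rec_uniq sizeE p0 (b := jt) hc) => i iN; rewrite hi // mulr0.
move: (hd j) => /eqP; rewrite mulf_eq0 => /orP[/eqP /dfac_eq0 ->|/eqP //].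
by rewrite -[jt]addr0 (hi 0%N N_gt0).
Qed.

Lemma twisted_cond_exists (w : nat -> C) :
  exists c, twisted_cond c /\ forall i, (i < N)%N -> c (jt + i%:Z) = w i.
Proof.
have NM : N = N.-1.+1 by rewrite prednK // N_gt0.
have [d [hd d_init]] := rec_exists sizeE p0 NM (fun i => dfac (jt + i%:Z) * w i) jt.
pose c j := if dfac j == 0 then w 0%N else d j / dfac j.
have dfac_c j : dfac j * c j = d j.
  rewrite /c; case: eqP => [hj|/eqP hj]; last by rewrite mulrC divfK.
  rewrite hj mul0r (dfac_eq0 hj) -[jt]addr0 d_init ?N_gt0 //.
  by rewrite addr0 -(dfac_eq0 hj) hj mul0r.
exists c; split; first by move=> s; rewrite -(hd s); apply: eq_bigr => k _; rewrite dfac_c.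
move=> i iN; rewrite /c; case: eqP => [/dfac_eq0|/eqP hj].
  by rewrite -{2}[jt]addr0 => /addrI /eqP; rewrite eqz_nat => /eqP <-.
by rewrite d_init // mulrC mulKf.
Qed.

Definition basis_vals (k : 'I_N) : int -> C :=
  proj1_sig (cid (twisted_cond_exists (fun i => (i == k)%:R))).

Lemma basis_valsP k : twisted_cond (basis_vals k) /\
  forall i, (i < N)%N -> basis_vals k (jt + i%:Z) = (i == k)%:R.
Proof. by rewrite /basis_vals; case: cid. Qed.

Definition basis_trace (k : 'I_N) : A -> C := trace_of (basis_vals k).

Lemma sum_delta n (a : 'I_n -> C) (i0 : 'I_n) :
  \sum_k a k * ((i0 : nat) == k)%:R = a i0.
Proof.
rewrite (bigD1 i0) //= eqxx mulr1 big1 ?addr0 // => k nk.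
by rewrite (_ : (i0 : nat) == k = false) ?mulr0 //; apply/negbTE; rewrite eq_sym.
Qed.

Lemma basis_trace_twisted k : is_twisted_trace g (basis_trace k).
Proof. exact/trace_of_twisted/(basis_valsP k).1. Qed.

Lemma basis_trace_free (c : 'I_N -> C) :
  (forall a, \sum_k c k * basis_trace k a = 0) -> forall k, c k = 0.
Proof.
move=> hc k0; have := hc (Xpow (jt + (k0 : nat)%:Z)).
under eq_bigr do rewrite /basis_trace trace_of_Xpow ((basis_valsP _).2 _ (ltn_ord k0)).
by rewrite sum_delta.
Qed.

(* a twisted trace T equals sum_k T(X^(jt + k)) basis_trace k: both are
   linear, vanish on u^i X^j for i != 0, and on X^j they agree by
   uniqueness of solutions of the condition *)
Lemma basis_trace_span (T : A -> C) : is_twisted_trace g T ->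
  exists c : 'I_N -> C, forall a, T a = \sum_k c k * basis_trace k a.
Proof.
move=> htr; have hT := htr.1.
pose alpha (k : 'I_N) := T (Xpow (jt + (k : nat)%:Z)); exists alpha.
have lin_comb : is_linform (fun a => \sum_k alpha k * basis_trace k a).
  move=> x a b /=; rewrite mulr_sumr -big_split /=; apply: eq_bigr => k _.
  by rewrite /basis_trace (trace_of_lin hq gwa) mulrDr mulrCA.
apply: (linform_eq_on_basis q0 gwa hT lin_comb) => i j /=.
have w := weight_mul q0 rels (weight_upow q0 rels i) (weight_Xpow q0 rels j).
rewrite addr0 in w; case: (eqVneq i 0) => [->|i0]; last first.
  rewrite (twisted_trace_weight hq gwa hg htr i0 w) big1 // => k _.
  by rewrite /basis_trace (trace_of_weight hq gwa _ i0 w) mulr0.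
rewrite [upow _ _ _]/= mul1r; apply/eqP; rewrite -subr_eq0; apply/eqP.
under eq_bigr do rewrite /basis_trace trace_of_Xpow.
clear w; move: j; apply: twisted_cond_uniq => [s|n nN].
  rewrite -[RHS](is_rec_comb alpha (twisted_trace_values htr) (fun k => (basis_valsP k).1) s).
  apply: eq_bigr => k _; rewrite mulrBr mulr_sumr; congr (_ * (_ - _)).
  by apply: eq_bigr => k' _; rewrite mulrCA.
under eq_bigr do rewrite ((basis_valsP _).2 _ nN).
by rewrite (sum_delta alpha (Ordinal nN)) subrr.
Qed.

End Dimension.

Theorem proposition2p1 (R : realType) (q : R[i]) (l : int) (p : {poly R[i]})
  (A : algType R[i]) (u v Z Zi : A) (t : R[i]) (g : A -> A) :
  0 < `|q| < 1 ->
  p`_0 != 0 -> (1 < size p)%N ->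
  is_gwa q l p u v Z Zi ->
  t != 0 ->
  is_gt t u v Z Zi g ->
  (forall T : A -> R[i],
     is_twisted_trace g T <->
     [/\ is_linform T,
         (forall (i : int) (a : A), i != 0 -> a \in weight_space q Z Zi i ->
            T a = 0)
       & forall (m : int) (r : {poly R[i]}),
           T (lpeval l p (q^-1 *: Z) (q *: Zi) * lpeval m r (q^-1 *: Z) (q *: Zi)
              - t *: (lpeval l p (q *: Z) (q^-1 *: Zi)
                      * lpeval m r (q *: Z) (q^-1 *: Zi))) = 0])
  /\
  exists Ts : 'I_(size p).-1 -> (A -> R[i]),
    [/\ forall k, is_twisted_trace g (Ts k),
        (forall c : 'I_(size p).-1 -> R[i],
           (forall a, \sum_k c k * Ts k a = 0) -> forall k, c k = 0)
      & forall T, is_twisted_trace g T ->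
          exists c : 'I_(size p).-1 -> R[i], forall a, T a = \sum_k c k * Ts k a].
Proof.
move=> hq p0 size_p gwa t0 hg; split=> [T|].
  split=> [htr|[hT hw hcond]].
    split=> [|i a i0 /weightP|m r]; first exact: htr.1.
      exact: (twisted_trace_weight hq gwa hg htr i0).
    exact: (twisted_trace_cond hq gwa hg m r htr).
  apply: (twisted_trace_of_cond hq gwa t0 hg hT) => // i a i0 /weightP.
  exact: hw.
exists (basis_trace hq p0 size_p gwa t0); split.
- exact: basis_trace_twisted.
- exact: basis_trace_free.
- exact: basis_trace_span.
Qed.
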